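(* Let $m\ge 2$ and $n\ge 1$. In any $m\times n$ maximal configuration resistant to predators, the number of occupied lots in row $m-1$ (the penultimate row) is at most $2\lceil n/3\rceil$.
   Context: An $m\times n$ configuration is a $0$-$1$ matrix $C=(C_{i,j})$, $1\le i\le m$, $1\le j\le n$; $C_{i,j}=1$ means lot $(i,j)$ is occupied by a house. Row $1$ is the northernmost and row $m$ the southernmost; column $1$ is westernmost and column $n$ easternmost. A house at $(i,j)$ is blocked from sunlight if the three lots $(i,j-1)$, $(i,j+1)$, $(i+1,j)$ all lie inside the grid and are all occupied (lots outside the grid never obstruct sunlight). $C$ is permissible if no house is blocked, and maximal if it is permissible and setting any single empty lot to $1$ yields a non-permissible configuration. A maximal configuration is resistant to predators if, for every empty lot, putting a house on it (alone) results in that new house being blocked. *)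

From mathcomp Require Import all_boot.
Set Implicit Arguments. Unset Strict Implicit. Unset Printing Implicit Defensive.

(* An m x n configuration: a 0-1 matrix, represented as a boolean function on
   1-based coordinates (i,j); only the entries with 1 <= i <= m, 1 <= j <= n
   are meaningful (entries outside the grid are ignored by every definition). *)
Definition config := nat -> nat -> bool.

Definition in_grid (m n i j : nat) : bool := (1 <= i <= m) && (1 <= j <= n).

Definition occ (m n : nat) (C : config) (i j : nat) : bool :=
  in_grid m n i j && C i j.

Definition blocked (m n : nat) (C : config) (i j : nat) : bool :=
  [&& occ m n C i (j.-1) && (1 < j), occ m n C i j.+1 & occ m n C i.+1 j].

Definition permissible (m n : nat) (C : config) : Prop :=
  forall i j, occ m n C i j -> ~~ blocked m n C i j.

Definition add_house (C : config) (a b : nat) : config :=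
  fun i j => ((i == a) && (j == b)) || C i j.

Definition maximal (m n : nat) (C : config) : Prop :=
  permissible m n C /\
  forall a b, in_grid m n a b -> ~~ C a b -> ~ permissible m n (add_house C a b).

Definition resistant (m n : nat) (C : config) : Prop :=
  maximal m n C /\
  forall a b, in_grid m n a b -> ~~ C a b -> blocked m n (add_house C a b) a b.

Definition row_count (m n : nat) (C : config) (i : nat) : nat :=
  \sum_(1 <= j < n.+1) occ m n C i j.

From mathcomp Require Import all_boot.
From mathcomp Require Import zify.

Set Implicit Arguments.
Unset Strict Implicit.
Unset Printing Implicit Defensive.

(* The bottom row of a resistant configuration is full: an empty lot there
   could never be blocked, since the lot south of it lies outside the grid.
   Hence a run of three occupied lots in row m-1 would block its middle house,
   and a 0-1 word of length n without three consecutive ones has at most two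
   ones in each of the ceil(n/3) consecutive blocks of length three. *)

Lemma sum_no_three_consecutive (g : nat -> bool) (a k : nat) :
  (forall j, a <= j -> j + 3 <= a + k -> ~~ [&& g j, g j.+1 & g j.+2]) ->
  \sum_(a <= j < a + k) g j <= 2 * ((k + 2) %/ 3).
Proof.
elim/ltn_ind: k a => k IH a no3.
have [k_lt3 | ] := ltnP k 3.
  have sum_le_k : \sum_(a <= j < a + k) g j <= k.
    rewrite -{2}(addKn a k) -[_ - _]muln1 -sum_nat_const_nat.
    by apply: leq_sum => j _; apply: leq_b1.
  by case: k k_lt3 sum_le_k {IH no3} => [|[|[|]]] // _ /leq_trans; apply.
case: k IH no3 => [|[|[|l]]] // IH no3 _.
have -> : a + l.+3 = a.+3 + l by lia.
do 3 (rewrite big_ltn; last lia).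
have tail : \sum_(a.+3 <= j < a.+3 + l) g j <= 2 * ((l + 2) %/ 3).
  apply: IH; first lia.
  by move=> j ja jl; apply: no3; lia.
have head := no3 a (leqnn a) ltac:(lia).
have -> : l.+3 + 2 = 1 * 3 + (l + 2) by lia.
rewrite divnMDl // mulnDr.
by move: head tail; case: (g a); case: (g a.+1); case: (g a.+2) => //=; lia.
Qed.

Lemma resistant_bottom_row (m n j : nat) (C : config) :
  resistant m n C -> in_grid m n m j -> C m j.
Proof.
move=> [_ res] grid_mj; apply/negPn/negP => empty_mj.
have /and3P [_ _ /andP [/andP [/andP [_ below_m] _] _]] := res m j grid_mj empty_mj.
by rewrite ltnn in below_m.
Qed.

Lemma permissible_no_three_in_row (m n i j : nat) (C : config) :
  permissible m n C -> 1 <= j -> occ m n C i.+1 j.+1 ->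
  ~~ [&& occ m n C i j, occ m n C i j.+1 & occ m n C i j.+2].
Proof.
move=> perm j_ge1 below; apply/and3P => -[left mid right].
by move/negP: (perm i j.+1 mid); apply; rewrite /blocked /= left right below ltnS j_ge1.
Qed.

Theorem mainTheorem7 (m n : nat) (C : config) :
  2 <= m -> 1 <= n -> resistant m n C ->
  row_count m n C m.-1 <= 2 * ((n + 2) %/ 3).
Proof.
move=> m_ge2 _ res; have [[perm _] _] := res.
rewrite /row_count -[n.+1]/(1 + n).
apply: sum_no_three_consecutive => j j_ge1 j_le.
apply: permissible_no_three_in_row => //.
rewrite prednK; last lia.
have grid : in_grid m n m j.+1 by rewrite /in_grid; lia.
by rewrite /occ grid (resistant_bottom_row res grid).
Qed.
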